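(* In the single-node deterministic selection process described in the context, let $c_8>0$ be arbitrary, and set $c_4=(b-1)\big((c_1/\Delta_{\min}(i))^{1/c_2}+1\big)$, $c_6=1-c_3/c_2$, $\xi(j)=\big((c_1/\Delta(j))^{1/c_2}+1\big)^{c_8}$ and $$c_7=(b-1)\Big(\max_{j\neq j^*}\xi(j)+(2(b-1))^{c_8}\Big)+(2c_4)^{c_8}.$$ Then for all $z>0$ and all $\tau\ge1$, $$\mathbb{P}\Big[\big|\mathbb{E}[V_\tau(i)]-V_\tau(i)\big|\ge\frac{z}{\tau^{c_6}}\Big]\le\frac{c_7}{z^{c_8}}.$$
   Context: Fix constants $c_1>0$ and $0<c_3<c_2$. A node $i$ has a finite set $C(i)$ of $b\ge2$ children; each child $j$ has a deterministic value $Q^*(j)\in[0,1]$, and there is a unique maximizer $j^*=\arg\max_{j\in C(i)}Q^*(j)$. Set $V^*(i)=Q^*(j^* )$, $\Delta(j)=Q^*(j^* )-Q^*(j)$ and $\Delta_{\min}(i)=\min_{j\neq j^*}\Delta(j)>0$. The node is visited at times $s=1,2,\dots$; at visit $s$ one child $\mu(s)$ is selected and yields value $Q^*(\mu(s))$. Let $T(i,s)=s-1$ be the number of previous visits to $i$ and $T(j,s)$ the number of previous selections of $j$ (before visit $s$). Selection rule: if some child has $T(j,s)=0$, select one such child (chosen at random); otherwise select a maximizer of $Q^*(j)+c_1\,T(i,s)^{c_3}/T(j,s)^{c_2}$, ties broken at random. After $\tau$ visits, $T_\tau(j)$ denotes the number of selections of $j$ among visits $1,\dots,\tau$, and $V_\tau(i)=\frac1\tau\sum_{s=1}^{\tau}Q^*(\mu(s))$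 is the average value of node $i$. *)

From HB Require Import structures.
From mathcomp Require Import all_boot all_order all_algebra.
From mathcomp Require Import reals exp.
Set Implicit Arguments. Unset Strict Implicit. Unset Printing Implicit Defensive.
Import Order.TTheory GRing.Theory Num.Theory.
Local Open Scope ring_scope.

Section Process.
Variables (R : realType) (C : finType) (Q : C -> R) (c1 c2 c3 : R).

Definition Tchild (h : seq C) (j : C) : nat := count_mem j h.

(* The UCB-like score  Q(j) + c1 * T(i,s)^c3 / T(j,s)^c2, with T(i,s) = size h. *)
Definition score (h : seq C) (j : C) : R :=
  Q j + c1 * powR (size h)%:R c3 / powR (Tchild h j)%:R c2.

Definition candidates (h : seq C) : {set C} :=
  let U := [set j | Tchild h j == 0%N] in
  if U != set0 then U
  else [set j | [forall k, score h k <= score h j]].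

(* Probability of a selection sequence of length tau: at each visit the
   child is chosen uniformly at random among the candidates. *)
Definition seq_prob (tau : nat) (t : tau.-tuple C) : R :=
  \prod_(k < tau)
     (if tnth t k \in candidates (take k t)
      then (#|candidates (take k t)|%:R)^-1 else 0).

Definition Vavg (tau : nat) (t : tau.-tuple C) : R :=
  (\sum_(k < tau) Q (tnth t k)) / tau%:R.

Definition EV (tau : nat) : R :=
  \sum_(t : tau.-tuple C) seq_prob t * Vavg t.

Definition prob_dev (tau : nat) (a : R) : R :=
  \sum_(t : tau.-tuple C | a <= `|EV tau - Vavg t|) seq_prob t.

End Process.

From HB Require Import structures.
From mathcomp Require Import all_boot all_order all_algebra.
From mathcomp Require Import reals exp.
From mathcomp Require Import ring lra.
Set Implicit Arguments. Unset Strict Implicit. Unset Printing Implicit Defensive.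
Import Order.TTheory GRing.Theory Num.Theory.
Local Open Scope ring_scope.

(** Every history of positive probability keeps each suboptimal child [j]
rare: if [j] has been selected [T] times among [s] visits, selecting it again
requires its exploration bonus [c1 s^c3 / T^c2] to make up the gap
[Delta j], so [T <= (c1/Delta j)^(1/c2) s^(c3/c2)].  Hence, almost surely,
[V_tau] lies in the window [[Q j* - c4 tau^-c6, Q j*]], and so does its mean.
The deviation [|E V_tau - V_tau|] is thus below [c4 tau^-c6] with probability
one: the tail probability vanishes for [z > c4] and is trivially at most
[1 <= (2 c4 / z)^c8] otherwise. *)

Lemma sum_seq_count_mem (R : nmodType) (T : finType) (F : T -> R) (s : seq T) :
  \sum_(x <- s) F x = \sum_j F j *+ count_mem j s.
Proof.
elim: s => [|x s IHs]; first by rewrite big_nil big1.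
rewrite big_cons IHs (bigD1 x) //= [in RHS](bigD1 x) //= eqxx mulrSr addrCA addrA.
by congr (_ + _); apply: eq_bigr => j /negbTE; rewrite /= eq_sym => ->.
Qed.

Section SelectionProcess.
Variables (R : realType) (C : finType) (Q : C -> R) (c1 c2 c3 : R).

Local Notation score := (score Q c1 c2 c3).
Local Notation candidates := (candidates Q c1 c2 c3).
Local Notation prob := (seq_prob Q c1 c2 c3).
Local Notation EV := (EV Q c1 c2 c3).
Local Notation prob_dev := (prob_dev Q c1 c2 c3).

Lemma candidates_card_gt0 (j0 : C) (h : seq C) : (0 < #|candidates h|)%N.
Proof.
rewrite card_gt0 /candidates /=; case: ifPn => // _.
have [j _ jmax] := @real_arg_maxP R C j0 predT (score h) isT (fun i _ => num_real _).
by apply/set0Pn; exists j; rewrite inE; apply/forallP => k; apply: jmax.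
Qed.

Definition tuple_split n (u : n.+1.-tuple C) : n.-tuple C * C :=
  ([tuple of belast (thead u) (behead u)], last (thead u) (behead u)).

Lemma rcons_tuple_split n (u : n.+1.-tuple C) :
  rcons_tuple (tuple_split u).1 (tuple_split u).2 = u.
Proof. by apply: val_inj; rewrite /= -lastI; case: u => [[]]. Qed.

Lemma sum_tuple_rcons n (F : n.+1.-tuple C -> R) :
  \sum_(u : n.+1.-tuple C) F u = \sum_(t : n.-tuple C) \sum_(x : C) F (rcons_tuple t x).
Proof.
rewrite pair_bigA /= (reindex (fun p => rcons_tuple p.1 p.2)) //.
exists (@tuple_split n) => [[t x] _ | u _]; last exact: rcons_tuple_split.
have := rcons_tuple_split (rcons_tuple t x).
by case: tuple_split => t' x' /(congr1 val)/rcons_inj[/val_inj -> ->].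
Qed.

Lemma seq_prob_rcons n (t : n.-tuple C) x :
  prob (rcons_tuple t x) =
  prob t * (if x \in candidates t then (#|candidates t|%:R)^-1 else 0).
Proof.
have take_rcons k : (k <= n)%N -> take k (rcons t x) = take k t.
  by move=> kn; rewrite -cats1 takel_cat ?size_tuple.
rewrite /seq_prob big_ord_recr /= take_rcons // take_oversize ?size_tuple //.
rewrite (tnth_nth x) /= nth_rcons size_tuple ltnn eqxx; congr (_ * _).
apply: eq_bigr => k _; rewrite take_rcons 1?ltnW //.
by rewrite !(tnth_nth x) /= nth_rcons size_tuple ltn_ord.
Qed.

Lemma seq_prob_ge0 n (t : n.-tuple C) : 0 <= prob t.
Proof. by apply: prodr_ge0 => k _; case: ifP; rewrite ?invr_ge0. Qed.

Lemma sum_seq_prob (j0 : C) n : \sum_(t : n.-tuple C) prob t = 1.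
Proof.
elim: n => [|n IHn].
  rewrite (big_pred1 [tuple]) => [|t]; first by rewrite /seq_prob big_ord0.
  by apply/esym/eqP; apply: tuple0.
rewrite sum_tuple_rcons -[RHS]IHn; apply: eq_bigr => t _.
under eq_bigr do rewrite seq_prob_rcons.
rewrite -mulr_sumr -big_mkcond /= sumr_const -[X in _ * X]mulr_natr mulVf ?mulr1 //.
by rewrite pnatr_eq0 -lt0n (candidates_card_gt0 j0).
Qed.

Lemma seq_prob_neq0_candidate n (t : n.-tuple C) (k : 'I_n) :
  prob t != 0 -> tnth t k \in candidates (take k t).
Proof. by move=> /prodf_neq0/(_ k isT); case: ifP => //; rewrite eqxx. Qed.

Lemma EV_window (j0 : C) n (lo hi : R) :
  (forall t : n.-tuple C, prob t != 0 -> lo <= Vavg Q t <= hi) ->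
  lo <= EV n <= hi.
Proof.
move=> window.
have mean_le (f g : n.-tuple C -> R) :
    (forall t, prob t != 0 -> f t <= g t) ->
    \sum_t prob t * f t <= \sum_t prob t * g t.
  move=> fg; apply: ler_sum => t _; have [->|/fg] := eqVneq (prob t) 0.
    by rewrite !mul0r.
  exact/ler_wpM2l/seq_prob_ge0.
have sum_cst (a : R) : \sum_(t : n.-tuple C) prob t * a = a.
  by rewrite -mulr_suml (sum_seq_prob j0) mul1r.
rewrite /EV -{1}[lo]sum_cst -[hi]sum_cst !mean_le // => t /window /andP[] //.
Qed.

Lemma prob_dev_le1 (j0 : C) n (a : R) : prob_dev n a <= 1.
Proof.
rewrite -(sum_seq_prob j0 n) [leRHS](bigID (fun t => a <= `|EV n - Vavg Q t|)) /=.
by rewrite lerDl sumr_ge0 // => t _; apply: seq_prob_ge0.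
Qed.

Lemma prob_dev_eq0 (j0 : C) n (lo hi a : R) :
  (forall t : n.-tuple C, prob t != 0 -> lo <= Vavg Q t <= hi) ->
  hi - lo < a -> prob_dev n a = 0.
Proof.
move=> window lt_width; have /andP[EVlo EVhi] := EV_window j0 window.
apply: big1 => t; apply: contraTeq => /window /andP[Vlo Vhi].
by rewrite -ltNge (le_lt_trans _ lt_width) // ler_norml; apply/andP; split; lra.
Qed.

Lemma prob_dev_le_powR (j0 : C) n (lo c s z p K : R) :
  0 < s -> 0 < z -> 0 < p -> powR (2 * c) p <= K ->
  (forall t : n.-tuple C, prob t != 0 -> lo - c / s <= Vavg Q t <= lo) ->
  prob_dev n (z / s) <= K / powR z p.
Proof.
move=> s_gt0 z_gt0 p_gt0 cK window; have zp_gt0 := powR_gt0 p z_gt0.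
have [z_le|lt_z] := lerP z (2 * c).
  apply: (le_trans (prob_dev_le1 j0 n _)); rewrite ler_pdivlMr // mul1r.
  by apply: le_trans cK; apply: ge0_ler_powR; rewrite // ?nnegrE ?ltW //; lra.
rewrite (prob_dev_eq0 j0 window); last by rewrite opprB addrC subrK ltr_pM2r ?invr_gt0 //; lra.
by rewrite divr_ge0 ?(le_trans _ cK) ?powR_ge0 // ltW.
Qed.

Section SuboptimalChildren.
Hypotheses (c1_ge0 : 0 <= c1) (c2_gt0 : 0 < c2) (c3_ge0 : 0 <= c3).

Lemma le_score h j : Q j <= score h j.
Proof. by rewrite /score lerDl !mulr_ge0 ?invr_ge0 ?powR_ge0. Qed.

Lemma candidate_count_le (h : seq C) (j k : C) n :
  Q j < Q k -> (size h <= n)%N -> j \in candidates h -> (0 < Tchild h j)%N ->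
  (Tchild h j)%:R <= powR (c1 / (Q k - Q j)) c2^-1 * powR n%:R (c3 / c2).
Proof.
move=> Qjk hn; rewrite /candidates /=.
case: ifPn => [_|_]; first by rewrite inE => /eqP ->.
rewrite inE => /forallP/(_ k) sc_kj T_gt0.
set T : R := (Tchild h j)%:R; set P := powR (size h)%:R c3.
have D_gt0 : 0 < Q k - Q j by rewrite subr_gt0.
have TP_gt0 : 0 < powR T c2 by rewrite powR_gt0 // ltr0n.
have P_ge0 : 0 <= P by apply: powR_ge0.
have bonus : powR T c2 <= c1 / (Q k - Q j) * P.
  have := le_trans (le_score h k) sc_kj; rewrite /score -/T -/P -lerBlDl.
  by rewrite ler_pdivlMr // mulrC -ler_pdivlMr // mulrAC.
have -> : T = powR (powR T c2) c2^-1 by rewrite -powRrM mulfV ?gt_eqF ?powRr1 ?ler0n.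
have cD_ge0 : 0 <= c1 / (Q k - Q j) by rewrite divr_ge0 // ltW.
apply: le_trans (ge0_ler_powR _ _ _ bonus) _.
- by rewrite invr_ge0 ltW.
- by rewrite nnegrE powR_ge0.
- by rewrite nnegrE mulr_ge0.
rewrite powRM // ler_wpM2l ?powR_ge0 // /P -powRrM.
by apply: ge0_ler_powR; rewrite ?nnegrE ?ler_nat // divr_ge0 // ltW.
Qed.

Lemma count_mem_le n (t : n.-tuple C) (j k : C) :
  Q j < Q k -> prob t != 0 ->
  (count_mem j t)%:R <= powR (c1 / (Q k - Q j)) c2^-1 * powR n%:R (c3 / c2) + 1.
Proof.
move=> Qjk t_pos; set B := _ * _.
have B_ge0 : 0 <= B by rewrite mulr_ge0 ?powR_ge0.
suff prefix_le m : (m <= n)%N -> (Tchild (take m t) j)%:R <= B + 1.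
  by have := prefix_le n (leqnn n); rewrite take_oversize ?size_tuple.
elim: m => [|m IHm] mn; first by rewrite take0 ler_wpDl.
have m_lt : (m < size t)%N by rewrite size_tuple.
have := seq_prob_neq0_candidate (Ordinal mn) t_pos; rewrite (tnth_nth j) /=.
rewrite (take_nth j m_lt) /Tchild -cats1 count_cat /= addn0.
case: eqP => [-> cand|_ _]; last by rewrite addn0 IHm 1?ltnW.
rewrite natrD lerD2r; case: (posnP (count_mem j (take m t))) => [->//|T_gt0].
by apply: candidate_count_le; rewrite // size_take_min size_tuple geq_minr.
Qed.

Variables (jstar : C) (d : R).
Hypotheses (d_gt0 : 0 < d) (gap_ge : forall j, j != jstar -> d <= Q jstar - Q j)
  (gap_le1 : forall j, Q jstar - Q j <= 1).

Lemma gap_ge0 j : 0 <= Q jstar - Q j.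
Proof. by have [->|/gap_ge] := eqVneq j jstar; [rewrite subrr | apply/le_trans/ltW]. Qed.

Lemma count_gap_le n (t : n.-tuple C) j :
  (0 < n)%N -> prob t != 0 ->
  (Q jstar - Q j) *+ count_mem j t <= (powR (c1 / d) c2^-1 + 1) * powR n%:R (c3 / c2).
Proof.
move=> n_gt0 t_pos; set A := powR (c1 / d) c2^-1; set P := powR n%:R (c3 / c2).
have A_ge0 : 0 <= A by apply: powR_ge0.
have P_ge1 : 1 <= P.
  have := @ge0_ler_powR R (c3 / c2) _ 1 n%:R; rewrite powR1; apply; rewrite ?nnegrE ?ler1n //.
  by rewrite divr_ge0 // ltW.
have [->|j_neq] := eqVneq j jstar; first by rewrite subrr mul0rn mulr_ge0 ?addr_ge0; lra.
have D_ge := gap_ge j_neq; have D_le := gap_le1 j.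
have D_gt0 : 0 < Q jstar - Q j by apply: lt_le_trans D_ge.
have Aj_le : powR (c1 / (Q jstar - Q j)) c2^-1 <= A.
  apply: ge0_ler_powR.
  - by rewrite invr_ge0 ltW.
  - by rewrite nnegrE divr_ge0 // ltW.
  - by rewrite nnegrE divr_ge0 // ltW.
  by rewrite ler_wpM2l // lef_pV2.
have Qj_lt : Q j < Q jstar by lra.
have cnt_le : (count_mem j t)%:R <= A * P + 1.
  apply: le_trans (count_mem_le Qj_lt t_pos) _.
  by rewrite lerD2r ler_wpM2r ?powR_ge0.
rewrite -mulr_natr; move: cnt_le; set c := (count_mem j t)%:R => cnt_le.
have c_ge0 : 0 <= c by rewrite ler0n.
nra.
Qed.

Lemma Vavg_window n (t : n.-tuple C) :
  (0 < n)%N -> prob t != 0 ->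
  Q jstar - (#|C|%:R - 1) * (powR (c1 / d) c2^-1 + 1) * powR n%:R (c3 / c2) / n%:R
    <= Vavg Q t <= Q jstar.
Proof.
move=> n_gt0 t_pos; rewrite -(mulrA _ (_ + 1)); set B := (_ + 1) * _.
have n_pos : 0 < n%:R :> R by rewrite ltr0n.
set S := \sum_j (Q jstar - Q j) *+ count_mem j t.
have gap : Q jstar - Vavg Q t = S / n%:R.
  rewrite /S -sum_seq_count_mem big_tuple sumrB sumr_const card_ord /Vavg.
  by field; rewrite gt_eqF.
have S_ge0 : 0 <= S by rewrite sumr_ge0 // => j _; rewrite mulrn_wge0 // gap_ge0.
have S_le : S <= (#|C|%:R - 1) * B.
  rewrite /S (bigD1 jstar) //= subrr mul0rn add0r.
  apply: le_trans (ler_sum _ (fun j _ => count_gap_le j n_gt0 t_pos)) _.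
  rewrite sumr_const (eq_card (B := predC1 jstar)) // cardC1 -[_ *+ _]mulr_natl.
  have C_gt0 : (0 < #|C|)%N by apply/card_gt0P; exists jstar.
  by rewrite -subn1 natrB.
have gap_le : Q jstar - Vavg Q t <= (#|C|%:R - 1) * B / n%:R.
  by rewrite gap ler_wpM2r // invr_ge0 ltW.
have gap_avg_ge0 : 0 <= Q jstar - Vavg Q t by rewrite gap divr_ge0 // ltW.
by apply/andP; split; lra.
Qed.

End SuboptimalChildren.

End SelectionProcess.

Theorem lemma8 (R : realType) (C : finType) (Q : C -> R) (jstar : C)
    (c1 c2 c3 c8 : R) :
  0 < c1 -> 0 < c3 -> c3 < c2 -> 0 < c8 ->
  (2 <= #|C|)%N ->
  (forall j, 0 <= Q j <= 1) ->
  (forall j, j != jstar -> Q j < Q jstar) ->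
  let b : R := #|C|%:R in
  let Delta (j : C) : R := Q jstar - Q j in
  (* Delta_min = min_{j <> j*} Delta j; all Delta j <= 1, so the initial 1 is harmless *)
  let Delta_min : R := \big[Num.min/1]_(j | j != jstar) Delta j in
  let c4 : R := (b - 1) * (powR (c1 / Delta_min) (c2^-1) + 1) in
  let c6 : R := 1 - c3 / c2 in
  let xi (j : C) : R := powR (powR (c1 / Delta j) (c2^-1) + 1) c8 in
  let c7 : R := (b - 1) * (\big[Num.max/0]_(j | j != jstar) xi j
                           + powR (2 * (b - 1)) c8) + powR (2 * c4) c8 in
  forall (z : R) (tau : nat), 0 < z -> (1 <= tau)%N ->
    prob_dev Q c1 c2 c3 tau (z / powR tau%:R c6) <= c7 / powR z c8.
Proof.
move=> c1_gt0 c3_gt0 c32 c8_gt0 C_ge2 Q01 Qmax b Delta Dmin c4 c6 xi c7.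
move=> z tau z_gt0 tau_gt0.
have c2_gt0 : 0 < c2 by apply: lt_trans c32.
have Dmin_gt0 : 0 < Dmin.
  apply: (big_ind (fun x => 0 < x)) => // [x y x_gt0 y_gt0 | j /Qmax].
    by rewrite lt_min x_gt0.
  by rewrite subr_gt0.
have Dmin_le j : j != jstar -> Dmin <= Delta j.
  by move=> j_neq; rewrite /Dmin (bigD1 j) //= ge_min lexx.
have Delta_le1 j : Delta j <= 1.
  by move: (Q01 j) (Q01 jstar) => /andP[? ?] /andP[? ?]; rewrite /Delta; lra.
have window :=
  Vavg_window (ltW c1_gt0) c2_gt0 (ltW c3_gt0) Dmin_gt0 Dmin_le Delta_le1 tau_gt0.
have xi_ge0 : 0 <= \big[Num.max/0]_(j | j != jstar) xi j.
  apply: (big_ind (fun x => 0 <= x)) => // [x y x_ge0 _ | j _]; last exact: powR_ge0.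
  by rewrite le_max x_ge0.
have c7_ge : powR (2 * c4) c8 <= c7.
  rewrite /c7 lerDr; apply: mulr_ge0; last by rewrite addr_ge0 ?powR_ge0.
  by rewrite subr_ge0 /b ler1n ltnW.
have tau_pos : 0 < tau%:R :> R by rewrite ltr0n.
have c6_split : c4 / powR tau%:R c6 = c4 * powR tau%:R (c3 / c2) / tau%:R.
  rewrite /c6 powRB ?powRr1 ?ler0n //; last by apply/implyP => _; rewrite gt_eqF.
  by field; rewrite !gt_eqF ?powR_gt0.
apply: (prob_dev_le_powR (lo := Q jstar) jstar (powR_gt0 c6 tau_pos) z_gt0 c8_gt0 c7_ge).
by move=> t /window; rewrite c6_split.
Qed.
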